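(* Let $\kappa$ be an infinite cardinal. The map $g\colon\mathcal{F}(\kappa)\times\mathcal{F}(\kappa)\to M_3[\mathcal{F}(\kappa)]$, $g(A,C)=(A,\,A\cap C,\,C)$, is a bounded lattice embedding. In particular, the range of $g$ is a bounded Boolean sublattice of $M_3[\mathcal{F}(\kappa)]$ isomorphic to $\mathcal{F}(\kappa)\times\mathcal{F}(\kappa)$.
   Context: $\mathcal{F}(\kappa)$ is the Boolean lattice of subsets $X\subseteq\kappa$ that are finite or cofinite. For sets $A,B,C$, $\mu(A,B,C)=(A\cap B)\cup(A\cap C)\cup(B\cap C)$. A triple is balanced if $A\cap B=A\cap C=B\cap C$; $M_3[\mathcal{F}(\kappa)]$ is the set of balanced triples in $\mathcal{F}(\kappa)^3$, a lattice under the componentwise order with componentwise intersection as meet and join $(A,B,C)\vee(A',B',C')=(U_1\cup m,U_2\cup m,U_3\cup m)$ where $U_1=A\cup A'$, $U_2=B\cup B'$, $U_3=C\cup C'$, $m=\mu(U_1,U_2,U_3)$; its bounds are $(\emptyset,\emptyset,\emptyset)$ and $(\kappa,\kappa,\kappa)$. *)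

From HB Require Import structures.
From mathcomp Require Import all_boot.
From mathcomp Require Import boolp classical_sets cardinality.
Set Implicit Arguments. Unset Strict Implicit. Unset Printing Implicit Defensive.
Local Open Scope classical_set_scope.

(* The cardinal kappa is represented by a type T; "kappa infinite" is
   ~ finite_set [set: T]. *)

(* Membership in F(kappa): finite or cofinite subsets of T. *)
Definition FC (T : Type) (X : set T) : Prop :=
  finite_set X \/ finite_set (~` X).

Definition mu (T : Type) (A B C : set T) : set T :=
  (A `&` B) `|` (A `&` C) `|` (B `&` C).

Definition triple (T : Type) := (set T * set T * set T)%type.

Definition balanced (T : Type) (t : triple T) : Prop :=
  let: (A, B, C) := t in A `&` B = A `&` C /\ A `&` C = B `&` C.

Definition M3 (T : Type) (t : triple T) : Prop :=
  let: (A, B, C) := t in [/\ FC A, FC B, FC C & balanced t].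

Definition m3meet (T : Type) (t t' : triple T) : triple T :=
  let: (A, B, C) := t in let: (A', B', C') := t' in
  (A `&` A', B `&` B', C `&` C').

Definition m3join (T : Type) (t t' : triple T) : triple T :=
  let: (A, B, C) := t in let: (A', B', C') := t' in
  let U1 := A `|` A' in let U2 := B `|` B' in let U3 := C `|` C' in
  let m := mu U1 U2 U3 in (U1 `|` m, U2 `|` m, U3 `|` m).

Definition m3bot (T : Type) : triple T := (set0, set0, set0).
Definition m3top (T : Type) : triple T := (setT, setT, setT).

Definition g (T : Type) (A C : set T) : triple T := (A, A `&` C, C).

From mathcomp Require Import all_boot.
From mathcomp Require Import boolp classical_sets cardinality.
Set Implicit Arguments. Unset Strict Implicit.
Local Open Scope classical_set_scope.

(* The join of M_3 recomputes every coordinate through the median of the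
   unions; for a triple (A, B, C) whose middle coordinate lies in A ∩ C the
   median is just A ∩ C. The coordinatewise unions of two triples (A, A ∩ C, C)
   have this shape, so M_3 joins them to (A ∪ A', (A ∪ A') ∩ (C ∪ C'), C ∪ C')
   and g preserves joins; meets, bounds and complements are then coordinatewise
   Boolean identities. None of this uses that T is infinite. *)

Lemma FC_setI (T : Type) (A C : set T) : FC A -> FC C -> FC (A `&` C).
Proof.
case=> [finA|finCA]; first by left; apply: sub_finite_set finA => x [].
case=> [finC|finCC]; first by left; apply: sub_finite_set finC => x [].
by right; rewrite setCI finite_setU.
Qed.

Lemma FC_setC (T : Type) (A : set T) : FC A -> FC (~` A).
Proof. by rewrite /FC setCK; case; [right|left]. Qed.

Lemma g_balanced (T : Type) (A C : set T) : balanced (g A C).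
Proof. by split; rewrite ?setIA ?setIid // -setIA setIid. Qed.

Lemma M3_g (T : Type) (A C : set T) : FC A -> FC C -> M3 (g A C).
Proof. by move=> FCA FCC; split => //; [exact: FC_setI | exact: g_balanced]. Qed.

Lemma mu_sub (T : Type) (A B C : set T) : B `<=` A `&` C -> mu A B C = A `&` C.
Proof.
move=> BAC; have [BA BC] : B `<=` A /\ B `<=` C by split=> x /BAC [].
by rewrite /mu (setIidr BA) (setIidl BC) setUAC setUid (setUidr BAC).
Qed.

Lemma m3meet_g (T : Type) (A C A' C' : set T) :
  m3meet (g A C) (g A' C') = g (A `&` A') (C `&` C').
Proof. by rewrite /m3meet /g setIACA. Qed.

Lemma m3join_g (T : Type) (A C A' C' : set T) :
  m3join (g A C) (g A' C') = g (A `|` A') (C `|` C').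
Proof.
have mid_sub : A `&` C `|` A' `&` C' `<=` (A `|` A') `&` (C `|` C').
  by move=> x [[]|[]]; split; by [left|right].
rewrite /m3join /g (mu_sub mid_sub) (setUidr mid_sub).
by rewrite (setUidl (@subIsetl _ _ _)) (setUidl (@subIsetr _ _ _)).
Qed.

Lemma g_set0 (T : Type) : g set0 set0 = @m3bot T.
Proof. by rewrite /g setI0. Qed.

Lemma g_setT (T : Type) : g setT setT = @m3top T.
Proof. by rewrite /g setIT. Qed.

Lemma g_inj (T : Type) (A C A' C' : set T) : g A C = g A' C' -> A = A' /\ C = C'.
Proof. by case=> -> _ ->. Qed.

Lemma m3meet_gC (T : Type) (A C : set T) :
  m3meet (g A C) (g (~` A) (~` C)) = @m3bot T.
Proof. by rewrite m3meet_g !setICr g_set0. Qed.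

Lemma m3join_gC (T : Type) (A C : set T) :
  m3join (g A C) (g (~` A) (~` C)) = @m3top T.
Proof. by rewrite m3join_g !setUv g_setT. Qed.

Theorem lemma5p1 (T : Type) (Tinf : ~ finite_set [set: T]) :
  (* g maps F(kappa) x F(kappa) into M_3[F(kappa)] *)
  (forall A C : set T, FC A -> FC C -> M3 (g A C)) /\
  (* g preserves meets (product order on F x F is componentwise) *)
  (forall A C A' C' : set T, FC A -> FC C -> FC A' -> FC C' ->
     g (A `&` A') (C `&` C') = m3meet (g A C) (g A' C')) /\
  (* g preserves joins *)
  (forall A C A' C' : set T, FC A -> FC C -> FC A' -> FC C' ->
     g (A `|` A') (C `|` C') = m3join (g A C) (g A' C')) /\
  (* g preserves the bounds *)
  g set0 set0 = @m3bot T /\ g setT setT = @m3top T /\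
  (* g is injective *)
  (forall A C A' C' : set T, FC A -> FC C -> FC A' -> FC C' ->
     g A C = g A' C' -> A = A' /\ C = C') /\
  (* the range of g is a Boolean sublattice: complements exist inside it *)
  (forall A C : set T, FC A -> FC C ->
     exists A' C' : set T, FC A' /\ FC C' /\
       m3meet (g A C) (g A' C') = @m3bot T /\
       m3join (g A C) (g A' C') = @m3top T).
Proof.
split; first exact: M3_g.
split; first by move=> A C A' C' *; rewrite m3meet_g.
split; first by move=> A C A' C' *; rewrite m3join_g.
split; first exact: g_set0.
split; first exact: g_setT.
split; first by move=> A C A' C' *; exact: g_inj.
move=> A C FCA FCC; exists (~` A), (~` C).
by rewrite m3meet_gC m3join_gC; do !split; exact: FC_setC.
Qed.
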